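(* Let $X$ be a real Banach space and let $A \subset X$ be a compact set not containing the zero vector. Let $\{ f_i : 1 \le i \le m\} \subset S_{X^*}$ be a collection of weak*-exposed points of $B_{X^*}$ such that $\max\{ f_i(y) : 1 \le i \le m\} > 0$ for each $y \in A$. Then $A$ has a ball-covering consisting of $m$ balls.
   Context: $B_{X^*}$, $S_{X^*}$ are the closed unit ball and unit sphere of the dual $X^*$. Let $\Psi : X \to X^{**}$ be the canonical embedding. A point $f_0 \in B_{X^*}$ is a weak*-exposed point of $B_{X^*}$ if there is $x \in X$ with $f_0(x) = \sup\{ f(x) : f \in B_{X^*}\}$ and $\{ f \in B_{X^*} : f(x) = f_0(x)\} = \{f_0\}$ (i.e. $\Psi(x)$ exposes $f_0$). A ball-covering of a set $A \subset X$ is a collection of open balls $B(c, r) = \{ z : \|c - z\| < r\}$, none of which contains the zero vector (i.e. $0 < r \le \|c\|$), whose union contains $A$. *)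

From HB Require Import structures.
From mathcomp Require Import all_boot all_order all_algebra.
From mathcomp Require Import all_classical all_reals all_analysis.
Set Implicit Arguments. Unset Strict Implicit. Unset Printing Implicit Defensive.
Import Order.TTheory GRing.Theory Num.Theory.
Import numFieldNormedType.Exports.
Local Open Scope classical_set_scope.
Local Open Scope ring_scope.

Section Dual.
Variables (R : realType) (X : normedModType R).

Definition is_dual (f : X -> R) : Prop :=
  (forall (a : R) (x y : X), f (a *: x + y) = a * f x + f y) /\ continuous f.

Definition dual_norm (f : X -> R) : R :=
  sup [set `|f x| | x in [set x : X | `|x| <= 1]].

Definition dual_ball : set (X -> R) :=
  [set f | is_dual f /\ dual_norm f <= 1].
Definition dual_sphere : set (X -> R) :=
  [set f | is_dual f /\ dual_norm f = 1].

Definition weak_star_exposed (f0 : X -> R) : Prop :=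
  dual_ball f0 /\
  exists x : X,
    f0 x = sup [set f x | f in dual_ball] /\
    [set f | dual_ball f /\ f x = f0 x] = [set f0].

Definition open_ball (c : X) (r : R) : set X := [set z | `|c - z| < r].

(* A has a ball-covering consisting of m balls (indexed by 'I_m), none of
   which contains 0, i.e. 0 < r_i <= ||c_i||. *)
Definition has_ball_covering (A : set X) (m : nat) : Prop :=
  exists (c : 'I_m -> X) (r : 'I_m -> R),
    (forall i, 0 < r i <= `|c i|) /\
    A `<=` \bigcup_(i in [set: 'I_m]) open_ball (c i) (r i).

End Dual.

From HB Require Import structures.
From mathcomp Require Import all_boot all_order all_algebra.
From mathcomp Require Import all_classical all_reals all_analysis.
From mathcomp Require Import finmap lra.
Set Implicit Arguments. Unset Strict Implicit. Unset Printing Implicit Defensive.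
Import Order.TTheory GRing.Theory Num.Theory.
Import numFieldNormedType.Exports.
Local Open Scope classical_set_scope.
Local Open Scope ring_scope.

(* If x exposes f and f z > 0, then z lies in a ball B(t x, t |x|) with t > 0; such balls
   miss 0 and grow with t.  Indeed the sublinear functional
   p w = inf_{t >= 0} (|w + t x| - t |x|), the one-sided derivative of the norm at x, has by
   Hahn-Banach a linear minorant g with g (-z) = p (-z).  Then g lies in the dual unit ball
   and g x = |x| = f x, so g = f by exposedness and p (-z) = - f z < 0.  By compactness one
   value of t serves all of A.  Hahn-Banach itself comes from Zorn's lemma: a minimal
   sublinear minorant of a sublinear functional is linear. *)

Section Sublinear.
Variables (R : realType) (V : lmodType R).
Implicit Types (p q g : V -> R) (v w : V).

Definition sublinear p :=
  (forall v w, p (v + w) <= p v + p w) /\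
  (forall (a : R) v, 0 < a -> p (a *: v) <= a * p v).

Definition linear_functional g :=
  forall (a : R) v w, g (a *: v + w) = a * g v + g w.

Lemma linear_functional0 g : linear_functional g -> g 0 = 0.
Proof. by move=> gl; have := gl 1 0 0; rewrite scale1r addr0 mul1r; lra. Qed.

Lemma linear_functionalZ g : linear_functional g -> forall a v, g (a *: v) = a * g v.
Proof. by move=> gl a v; have := gl a v 0; rewrite linear_functional0 // !addr0. Qed.

Lemma linear_functionalN g : linear_functional g -> forall v, g (- v) = - g v.
Proof. by move=> gl v; rewrite -scaleN1r linear_functionalZ // mulN1r. Qed.

Lemma linear_functionalB g : linear_functional g -> forall v w, g (v - w) = g v - g w.
Proof. by move=> gl v w; rewrite addrC -scaleN1r gl mulN1r addrC. Qed.

Section SublinearTheory.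
Variable p : V -> R.
Hypothesis sp : sublinear p.

Lemma sublinearZ (a : R) v : 0 < a -> p (a *: v) = a * p v.
Proof.
move=> a0; apply/eqP; rewrite eq_le sp.2 //=.
have := sp.2 a^-1 (a *: v); rewrite invr_gt0 => /(_ a0).
rewrite scalerA mulVf ?gt_eqF // scale1r -(ler_pM2l a0) mulrA mulfV ?gt_eqF //.
by rewrite mul1r.
Qed.

Lemma sublinear0 : p 0 = 0.
Proof. by have := sublinearZ 0 (ltr0n R 2); rewrite scaler0; lra. Qed.

Lemma sublinearZ_ge0 (t : R) v : 0 <= t -> p (t *: v) = t * p v.
Proof.
rewrite le_eqVlt => /predU1P [<-|t0]; last exact: sublinearZ.
by rewrite scale0r mul0r sublinear0.
Qed.

Lemma sublinear_oppN_le v : - p (- v) <= p v.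
Proof. by have := sp.1 v (- v); rewrite addrN sublinear0; lra. Qed.

End SublinearTheory.

(* For p the norm this is the one-sided derivative of p at v in direction w: the expression
   is nonincreasing in t and tends to that derivative as t -> +oo. *)
Definition ray_inf p v w :=
  inf [set p (w + t *: v) - t * p v | t in [set t : R | 0 <= t]].

Section RayInf.
Variables (p : V -> R) (v : V).
Hypothesis sp : sublinear p.

Let ray_set w := [set p (w + t *: v) - t * p v | t in [set t : R | 0 <= t]].

Let ray_set_lbound w : lbound (ray_set w) (- p (- w)).
Proof.
move=> _ [t t0 <-]; rewrite -(sublinearZ_ge0 sp) //.
by have := sp.1 (w + t *: v) (- w); rewrite addrC addKr; lra.
Qed.

Let ray_set_n0 w : ray_set w !=set0.
Proof. by exists (p (w + 0 *: v) - 0 * p v), 0; rewrite /=. Qed.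

Lemma ray_inf_le w (t : R) : 0 <= t -> ray_inf p v w <= p (w + t *: v) - t * p v.
Proof.
move=> t0; apply: ge_inf; first by exists (- p (- w)); exact: ray_set_lbound.
by exists t.
Qed.

Lemma ray_inf_ge w (c : R) :
  (forall t, 0 <= t -> c <= p (w + t *: v) - t * p v) -> c <= ray_inf p v w.
Proof.
move=> hc; apply: lb_le_inf; first exact: ray_set_n0.
by move=> _ [t t0 <-]; exact: hc.
Qed.

Lemma ray_inf_lt w (c : R) : ray_inf p v w < c ->
  exists2 t, 0 <= t & p (w + t *: v) - t * p v < c.
Proof.
case/inf_lt; first exact: ray_set_n0.
by move=> _ [t t0 <-]; exists t.
Qed.

Lemma ray_inf_le_self w : ray_inf p v w <= p w.
Proof. by have := ray_inf_le w (lexx 0); rewrite scale0r addr0 mul0r subr0. Qed.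

Lemma ray_inf_le_shift w : ray_inf p v w <= p (w + v) - p v.
Proof. by have := ray_inf_le w ler01; rewrite scale1r mul1r. Qed.

Lemma ray_inf_sublinear : sublinear (ray_inf p v).
Proof.
split=> [w1 w2|a w a0].
- have step t1 t2 : 0 <= t1 -> 0 <= t2 -> ray_inf p v (w1 + w2) <=
      (p (w1 + t1 *: v) - t1 * p v) + (p (w2 + t2 *: v) - t2 * p v).
    move=> t10 t20; have := ray_inf_le (w1 + w2) (addr_ge0 t10 t20).
    have := sp.1 (w1 + t1 *: v) (w2 + t2 *: v).
    by rewrite addrACA -scalerDl mulrDl; lra.
  suff : ray_inf p v (w1 + w2) - ray_inf p v w1 <= ray_inf p v w2 by lra.
  apply: ray_inf_ge => t2 t20.
  suff : ray_inf p v (w1 + w2) - (p (w2 + t2 *: v) - t2 * p v) <= ray_inf p v w1.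
    by lra.
  by apply: ray_inf_ge => t1 t10; have := step t1 t2 t10 t20; lra.
- suff : ray_inf p v (a *: w) / a <= ray_inf p v w by rewrite ler_pdivrMr // mulrC.
  apply: ray_inf_ge => t t0; rewrite ler_pdivrMr // mulrC.
  have := ray_inf_le (a *: w) (mulr_ge0 (ltW a0) t0).
  by rewrite -scalerA -scalerDr (sublinearZ sp) // -mulrA -mulrBr.
Qed.

End RayInf.

Lemma minimal_sublinear_linear p : sublinear p ->
  (forall p', sublinear p' -> (forall v, p' v <= p v) -> forall v, p v <= p' v) ->
  linear_functional p.
Proof.
move=> sp pmin.
have superadditive v w : p v + p w <= p (v + w).
  have := pmin _ (ray_inf_sublinear v sp) (ray_inf_le_self v sp) w.
  by have := ray_inf_le_shift v sp w; rewrite [w + v]addrC; lra.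
have additive v w : p (v + w) = p v + p w.
  by apply/eqP; rewrite eq_le sp.1 superadditive.
have odd v : p (- v) = - p v.
  by have := additive v (- v); rewrite addrN sublinear0 //; lra.
move=> a v w; rewrite additive; congr (_ + _).
have [a0|a0|->] := ltgtP a 0; last by rewrite scale0r mul0r sublinear0.
- by rewrite -{1}(opprK a) scaleNr odd (sublinearZ sp) ?oppr_gt0 // mulNr opprK.
- exact: sublinearZ.
Qed.

Definition pointwise_inf (S : set (V -> R)) v := inf [set p v | p in S].

Section ChainInf.
Variables (q : V -> R) (S : set (V -> R)).
Hypotheses (S_n0 : S !=set0) (S_sub : forall p, S p -> sublinear p /\ forall v, p v <= q v)
  (S_chain : total_on S (fun p1 p2 => forall v, p1 v <= p2 v)).

Let values_lbound v : has_lbound [set p v | p in S].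
Proof.
exists (- q (- v)) => _ [p Sp <-]; have [sp pq] := S_sub Sp.
by apply: le_trans (sublinear_oppN_le sp v); rewrite lerN2.
Qed.

Lemma pointwise_inf_le p v : S p -> pointwise_inf S v <= p v.
Proof. by move=> Sp; apply: (ge_inf (values_lbound v)); exists p. Qed.

Let pointwise_inf_ge v c : (forall p, S p -> c <= p v) -> c <= pointwise_inf S v.
Proof.
move=> hc; apply: lb_le_inf => [|_ [p Sp <-]]; last exact: hc.
by have [p Sp] := S_n0; exists (p v), p.
Qed.

Lemma chain_pointwise_inf_sublinear : sublinear (pointwise_inf S).
Proof.
split=> [v w|a v a0].
- have step p1 p2 : S p1 -> S p2 -> pointwise_inf S (v + w) <= p1 v + p2 w.
    move=> Sp1 Sp2; have [sp1 _] := S_sub Sp1; have [sp2 _] := S_sub Sp2.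
    case: (S_chain Sp1 Sp2) => le12.
    + apply: le_trans (pointwise_inf_le _ Sp1) _; have := sp1.1 v w; have := le12 w; lra.
    + apply: le_trans (pointwise_inf_le _ Sp2) _; have := sp2.1 v w; have := le12 v; lra.
  suff : pointwise_inf S (v + w) - pointwise_inf S v <= pointwise_inf S w by lra.
  apply: pointwise_inf_ge => p2 Sp2.
  suff : pointwise_inf S (v + w) - p2 w <= pointwise_inf S v by lra.
  by apply: pointwise_inf_ge => p1 Sp1; have := step _ _ Sp1 Sp2; lra.
- suff : pointwise_inf S (a *: v) / a <= pointwise_inf S v.
    by rewrite ler_pdivrMr // mulrC.
  apply: pointwise_inf_ge => p Sp; rewrite ler_pdivrMr // mulrC.
  exact: le_trans (pointwise_inf_le _ Sp) ((S_sub Sp).1.2 _ _ a0).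
Qed.

End ChainInf.

Theorem hahn_banach q : sublinear q -> exists2 g, linear_functional g & forall v, g v <= q v.
Proof.
move=> sq.
pose below := {p : V -> R | sublinear p /\ forall v, p v <= q v}.
pose top : below := exist _ q (conj sq (fun v => lexx (q v))).
pose above (s t : below) := `[< forall v, sval t v <= sval s v >].
have [||C Ctot|t tmin] := @ZL_preorder below top above.
- by move=> s; apply/asboolP.
- by move=> r s t /asboolP rs /asboolP st; apply/asboolP => v; exact: le_trans (st v) (rs v).
- pose S := sval @` C `|` [set q].
  have S_sub p : S p -> sublinear p /\ forall v, p v <= q v.
    by case=> [[s _ <-]|->]; [exact: (svalP s) | exact: (svalP top)].
  have S_chain : total_on S (fun p1 p2 => forall v, p1 v <= p2 v).
    move=> _ _ [[s Cs <-]|->] [[t Ct <-]|->].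
    + by case: (Ctot _ _ Cs Ct) => /asboolP; [right|left].
    + by left; apply: (proj2 (svalP s)).
    + by right; apply: (proj2 (svalP t)).
    + by left.
  have Sq : S q by right.
  have S_n0 : S !=set0 by exists q.
  pose m : below := exist _ _ (conj (chain_pointwise_inf_sublinear S_n0 S_sub S_chain)
    (fun v => pointwise_inf_le S_sub v Sq)).
  by exists m => s Cs; apply/asboolP => v; apply: (pointwise_inf_le S_sub); left; exists s.
- exists (sval t); last exact: (proj2 (svalP t)).
  apply: minimal_sublinear_linear; first exact: (proj1 (svalP t)).
  move=> p sp pt; have pq v : p v <= q v := le_trans (pt v) (proj2 (svalP t) v).
  by have /asboolP := tmin (exist _ p (conj sp pq)) (asboolT pt).
Qed.

Corollary hahn_banach_at q v : sublinear q ->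
  exists g, [/\ linear_functional g, forall w, g w <= q w & g v = q v].
Proof.
move=> sq; have [g gl gle] := hahn_banach (ray_inf_sublinear v sq).
have gq w : g w <= q w := le_trans (gle w) (ray_inf_le_self v sq w).
exists g; split=> //; apply/eqP; rewrite eq_le gq /=.
have := le_trans (gle (- v)) (ray_inf_le_shift v sq (- v)).
by rewrite addNr (sublinear0 sq) (linear_functionalN gl) sub0r lerN2.
Qed.

End Sublinear.

Section DualBall.
Variables (R : realType) (X : normedModType R).
Implicit Types (f g h : X -> R) (x y z : X).

Lemma norm_sublinear : sublinear (fun x : X => `|x|).
Proof.
split=> [x y|a x a0]; first exact: ler_normD.
by rewrite normrZ gtr0_norm.
Qed.

Lemma dual_norm_le h (c : R) :
  (forall x, `|x| <= 1 -> `|h x| <= c) -> dual_norm h <= c.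
Proof.
move=> hc; apply: ge_sup => [|_ [x x1 <-]]; last exact: hc.
by exists `|h 0|, 0 => //=; rewrite normr0 ler01.
Qed.

Lemma is_dual_bounded h : is_dual h -> exists M, forall x, `|x| <= 1 -> `|h x| <= M.
Proof.
move=> [hl hc]; have h0 := linear_functional0 hl.
have /nbhs_normP [d /= d0 hd] : \forall x \near (0 : X), `|h 0 - h x| < 1.
  by move: (hc 0) => /cvgrPdist_lt; apply.
exists (2 / d) => x x1.
have d2 : 0 < d / 2 by rewrite divr_gt0.
have : `|0 - d / 2 *: x| < d.
  rewrite sub0r normrN normrZ gtr0_norm //.
  have : d / 2 * `|x| <= d / 2 by rewrite ler_piMr // ltW.
  lra.
move=> /hd /=; rewrite h0 sub0r normrN (linear_functionalZ hl) normrM (gtr0_norm d2).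
by rewrite ler_pdivlMr //; lra.
Qed.

Lemma dual_ball_le_norm h x : dual_ball h -> `|h x| <= `|x|.
Proof.
(* Continuity is needed: for unbounded h, dual_norm h is the junk value of sup. *)
move=> [hd hn]; have hl := hd.1.
have [M hM] := is_dual_bounded hd.
have unit_ball y : `|y| <= 1 -> `|h y| <= 1.
  move=> y1; apply: le_trans hn; apply: ub_le_sup; last by exists y.
  by exists M => _ [y' y'1 <-]; exact: hM.
have [->|x0] := eqVneq x 0; first by rewrite linear_functional0 // !normr0.
have nx : 0 < `|x| by rewrite normr_gt0.
have := unit_ball (`|x|^-1 *: x).
rewrite (linear_functionalZ hl) normrM !normrZ normfV normr_id mulVf ?gt_eqF //.
by rewrite lexx ler_pdivrMl // mulr1; apply.
Qed.

Lemma le_norm_dual_ball g :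
  linear_functional g -> (forall x, g x <= `|x|) -> dual_ball g.
Proof.
move=> gl gle.
have gnorm x : `|g x| <= `|x|.
  by rewrite ler_norml gle andbT -(normrN x) lerNl -linear_functionalN.
split; last by apply: dual_norm_le => x; apply: le_trans.
split=> // x; apply/cvgrPdist_lt => e e0; apply/nbhs_normP; exists e => //= y xy.
by rewrite -linear_functionalB //; exact: le_lt_trans (gnorm _) xy.
Qed.

Lemma dual_ball_norming x : exists2 g, dual_ball g & g x = `|x|.
Proof.
have [g [gl gle gx]] := hahn_banach_at x norm_sublinear.
by exists g => //; exact: le_norm_dual_ball.
Qed.

Lemma sup_dual_ball x : sup [set g x | g in @dual_ball R X] = `|x|.
Proof.
have [g0 g0d g0x] := dual_ball_norming x.
have ub : ubound [set g x | g in @dual_ball R X] `|x|.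
  by move=> _ [g gd <-]; exact: le_trans (ler_norm _) (dual_ball_le_norm _ gd).
apply/le_anti/andP; split; first by apply: ge_sup => //; exists (g0 x), g0.
by rewrite -g0x; apply: ub_le_sup; [exists `|x| | exists g0].
Qed.

Lemma exposing_vector_neq0 f x : dual_sphere f ->
  [set g | dual_ball g /\ g x = f x] = [set f] -> x != 0.
Proof.
move=> [[fl _] f1] fexp; apply/eqP => x0.
have zero_ball : dual_ball (fun _ : X => 0 : R).
  by apply: le_norm_dual_ball => [a v w|v]; rewrite ?mulr0 ?addr0.
have : [set g | dual_ball g /\ g x = f x] (fun _ => 0 : R).
  by split=> //; rewrite x0 linear_functional0.
rewrite fexp => /= zero_f.
have : dual_norm (fun _ : X => 0 : R) <= 0 by apply: dual_norm_le => v _; rewrite normr0.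
by rewrite zero_f f1 ler10.
Qed.

Lemma exposed_ray_ball f x z :
  f x = sup [set g x | g in @dual_ball R X] ->
  [set g | dual_ball g /\ g x = f x] = [set f] ->
  0 < f z -> exists2 t, 0 < t & open_ball (t *: x) (t * `|x|) z.
Proof.
move=> fx fexp fz.
have snorm := norm_sublinear.
have [g [gl g_le gz]] := hahn_banach_at (- z) (ray_inf_sublinear x snorm).
have gd : dual_ball g.
  by apply: le_norm_dual_ball => // y; exact: le_trans (g_le y) (ray_inf_le_self x snorm y).
have gx : g x = f x.
  rewrite fx sup_dual_ball; apply/le_anti/andP; split.
    exact: le_trans (ler_norm _) (dual_ball_le_norm _ gd).
  have := le_trans (g_le (- x)) (ray_inf_le_shift x snorm (- x)).
  by rewrite addNr normr0 (linear_functionalN gl) sub0r lerN2.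
have : [set g | dual_ball g /\ g x = f x] g by [].
rewrite fexp => /= gf.
have : g (- z) < 0 by rewrite (linear_functionalN gl) gf oppr_lt0.
rewrite gz => /ray_inf_lt [t t0]; rewrite subr_lt0 addrC.
have [->|tn0] := eqVneq t 0; first by rewrite scale0r add0r mul0r normr_lt0.
by exists t; rewrite // lt_def tn0.
Qed.

Lemma open_ballE (c : X) (r : R) : open_ball c r = ball c r.
Proof. by rewrite -ball_normE. Qed.

Lemma open_ball_ray_homo x (s t : R) :
  s <= t -> open_ball (s *: x) (s * `|x|) `<=` open_ball (t *: x) (t * `|x|).
Proof.
rewrite /open_ball => st y /= hy.
have -> : t *: x - y = (s *: x - y) + (t - s) *: x.
  by rewrite scalerBl [RHS]addrC addrA subrK.
apply: le_lt_trans (ler_normD _ _) _; rewrite normrZ ger0_norm ?subr_ge0 //.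
by rewrite mulrBl; lra.
Qed.

End DualBall.

Lemma compact_nondecreasing_cover (R : realType) (T : ptopologicalType)
    (A : set T) (U : R -> set T) :
  compact A -> (forall r, open (U r)) -> (forall r s, r <= s -> U r `<=` U s) ->
  A `<=` \bigcup_r U r -> exists r, A `<=` U r.
Proof.
move=> + Uo Uhomo AU; rewrite compact_cover => cA.
have [D _ AD] := cA R setT U (fun r _ => Uo r) AU.
exists (\big[Order.max/0]_(r <- D) r) => a /AD [r Dr Ura].
by apply: Uhomo Ura; apply: le_bigmax_seq.
Qed.

Theorem mainTheorem5 (R : realType) (X : completeNormedModType R)
  (A : set X) (m : nat) (f : 'I_m -> X -> R) :
  compact A -> ~ A 0 ->
  (forall i, dual_sphere (f i) /\ weak_star_exposed (f i)) ->
  (forall y, A y -> exists i, 0 < f i y) ->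
  has_ball_covering A m.
Proof.
(* 0 \notin A already follows from the positivity hypothesis. *)
move=> cA _ hf hpos.
have /choice [x hx] : forall i, exists x : X, [/\ x != 0,
    f i x = sup [set g x | g in @dual_ball R X] &
    [set g | dual_ball g /\ g x = f i x] = [set f i]].
  move=> i; have [fs [_ [x [fx fexp]]]] := hf i.
  by exists x; split=> //; exact: exposing_vector_neq0 fs fexp.
pose U r := \bigcup_(i in [set: 'I_m]) open_ball (r *: x i) (r * `|x i|).
have [|||r AU] := @compact_nondecreasing_cover R X A U cA.
- by move=> r; apply: bigcup_open => i _; rewrite open_ballE; exact: ball_open.
- by move=> r s rs y [i _ hy]; exists i => //; exact: open_ball_ray_homo rs _ hy.
- move=> y Ay; have [i fiy] := hpos y Ay; have [_ fx fexp] := hx i.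
  by have [t _ ht] := exposed_ray_ball fx fexp fiy; exists t => //; exists i.
(* r itself may be nonpositive, e.g. when A is empty. *)
have r1_gt0 : 0 < Num.max r 1 by rewrite lt_max ltr01 orbT.
exists (fun i => Num.max r 1 *: x i), (fun i => Num.max r 1 * `|x i|); split.
- move=> i; have [xi0 _ _] := hx i.
  by rewrite normrZ gtr0_norm // lexx andbT mulr_gt0 // normr_gt0.
- move=> y /AU [i _ hy]; exists i => //.
  by apply: open_ball_ray_homo hy; rewrite le_max lexx.
Qed.
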